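(* Let $\widetilde{\Sigma}=\widetilde{\Sigma}_1\uplus\cdots\uplus\widetilde{\Sigma}_n$ for pairwise disjoint visibly pushdown alphabets $\widetilde{\Sigma}_i$. If $\prec$ is a visibly pushdown contextual order on $\widetilde{\Sigma}$, then $\mathrm{red}_\prec(\widetilde{\Sigma}^* )$ is a visibly pushdown language.
   Context: A visibly pushdown (VP) alphabet is a finite alphabet partitioned into calls $\Sigma^{\mathsf{call}}$, returns $\Sigma^{\mathsf{ret}}$ and internals $\Sigma^{\mathsf{int}}$; $\widetilde{\Sigma}$ is the VP alphabet whose calls/returns/internals are the unions of those of the $\widetilde{\Sigma}_i$. A visibly pushdown automaton (VPA) $(Q,Q^{\mathsf{in}},\Gamma,\delta,Q^{\mathsf F})$ has a stack alphabet $\Gamma$ with bottom symbol $\bot$; on a call it moves to a new state and pushes a symbol of $\Gamma\setminus\{\bot\}$, on a return it pops the top symbol (reading $\bot$ when the stack is empty, which is not removed), on an internal it leaves the stack unchanged; it accepts when it ends in a state of $Q^{\mathsf F}$. A visibly pushdown language is one accepted by a VPA. The VPA is deterministic if it has one initial state and at most one transition per state/letter (and top-of-stack symbol for returns), and complete if it has at least one. Let $\mathbb{I}=\{(a,b):a\in\widetilde{\Sigma}_i,b\in\widetilde{\Sigma}_j,i\ne j\}$ and $\equiv_{\mathbb{I}}$ the least reflexive transitive relation on $\widetilde{\Sigma}^*$ with $uabv\equiv_{\mathbb{I}}ubav$ for $(a,b)\in\mathbb{I}$. A contextual order is a map $\prec$ from $\widetilde{\Sigma}^*$ to strict total orders on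 $\widetilde{\Sigma}$, $x\mapsto\prec_x$; it induces $\preceq$ on $\widetilde{\Sigma}^*$: $\sigma\preceq\rho$ iff $\sigma$ is a prefix of $\rho$ or $\sigma=\alpha a\beta$, $\rho=\alpha b\gamma$ with $a\prec_\alpha b$. For a language $L$, $\mathrm{red}_\prec(L)=\{w\in L:\forall u\in L,\ (u\equiv_{\mathbb{I}}w\wedge u\preceq w)\Rightarrow u=w\}$. A contextual order $\prec$ is visibly pushdown if there is a complete deterministic VPA $A$ over $\widetilde{\Sigma}$ and a map $\mathsf{ord}$ from states of $A$ to strict total orders on $\widetilde{\Sigma}$ such that for every $w\in\widetilde{\Sigma}^*$, $\prec_w=\mathsf{ord}(q)$ where $q$ is the state reached by $A$ after reading $w$. *)

From mathcomp Require Import all_boot.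
Set Implicit Arguments. Unset Strict Implicit. Unset Printing Implicit Defensive.

Inductive vpkind := Call | Ret | Int.

Section VP.
Variable Sigma : finType.
Variable kind : Sigma -> vpkind.

Record vpa := VPA {
  vstate : finType;
  vstack : finType;
  vbot : vstack;
  vinit : {set vstate};
  vfinal : {set vstate};
  (* call transition (q, a, q', gamma): move to q', push gamma (gamma <> bot) *)
  vcall : vstate -> Sigma -> vstate -> vstack -> bool;
  (* return transition (q, a, gamma, q'): pop gamma (gamma = bot on empty stack) *)
  vret  : vstate -> Sigma -> vstack -> vstate -> bool;
  vint  : vstate -> Sigma -> vstate -> bool
}.
Arguments vbot : clear implicits.
Arguments vinit : clear implicits.
Arguments vfinal : clear implicits.
Arguments vcall : clear implicits.
Arguments vret : clear implicits.
Arguments vint : clear implicits.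

Variable A : vpa.

(* Configurations: state and stack (top first, bottom symbol implicit). *)
Definition vconfig := (vstate A * seq (vstack A))%type.

Definition vstep (c : vconfig) (a : Sigma) (c' : vconfig) : Prop :=
  match kind a with
  | Call => exists g, g != vbot A /\ vcall A c.1 a c'.1 g /\ c'.2 = g :: c.2
  | Ret => (c.2 = [::] /\ vret A c.1 a (vbot A) c'.1 /\ c'.2 = [::])
           \/ (exists g s0, c.2 = g :: s0 /\ vret A c.1 a g c'.1 /\ c'.2 = s0)
  | Int => vint A c.1 a c'.1 /\ c'.2 = c.2
  end.

Fixpoint vreach (c : vconfig) (w : seq Sigma) (c' : vconfig) : Prop :=
  match w with
  | [::] => c = c'
  | a :: w' => exists c1, vstep c a c1 /\ vreach c1 w' c'
  end.

Definition vaccepts (w : seq Sigma) : Prop :=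
  exists q0 q s, q0 \in vinit A /\ vreach (q0, [::]) w (q, s) /\ q \in vfinal A.

Definition vdet_complete : Prop :=
  #|vinit A| = 1 /\
  (forall q a, kind a = Call ->
     exists! qg : vstate A * vstack A, qg.2 != vbot A /\ vcall A q a qg.1 qg.2) /\
  (forall q a g, kind a = Ret -> exists! q', vret A q a g q') /\
  (forall q a, kind a = Int -> exists! q', vint A q a q').

End VP.

Definition vp_language (Sigma : finType) (kind : Sigma -> vpkind)
  (L : seq Sigma -> Prop) : Prop :=
  exists A : vpa Sigma, forall w, L w <-> vaccepts kind A w.

Definition strict_total_order (T : eqType) (r : rel T) : Prop :=
  irreflexive r /\ transitive r /\ (forall x y, x != y -> r x y || r y x).

Definition contextual_order (Sigma : finType) (prec : seq Sigma -> rel Sigma) :=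
  forall x, strict_total_order (prec x).

Definition word_le (Sigma : finType) (prec : seq Sigma -> rel Sigma)
  (sigma rho : seq Sigma) : Prop :=
  prefix sigma rho \/
  exists alpha a beta b gamma,
    sigma = alpha ++ a :: beta /\ rho = alpha ++ b :: gamma /\ prec alpha a b.

Inductive trace_eq (Sigma : finType) (n : nat) (comp : Sigma -> 'I_n)
  : seq Sigma -> seq Sigma -> Prop :=
| te_refl w : trace_eq comp w w
| te_swap u a b v : comp a != comp b ->
    trace_eq comp (u ++ a :: b :: v) (u ++ b :: a :: v)
| te_trans w1 w2 w3 : trace_eq comp w1 w2 -> trace_eq comp w2 w3 ->
    trace_eq comp w1 w3.

Definition red (Sigma : finType) (n : nat) (comp : Sigma -> 'I_n)
  (prec : seq Sigma -> rel Sigma) (L : seq Sigma -> Prop) (w : seq Sigma) : Prop :=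
  L w /\ forall u, L u -> trace_eq comp u w -> word_le prec u w -> u = w.

Definition vp_contextual_order (Sigma : finType) (kind : Sigma -> vpkind)
  (prec : seq Sigma -> rel Sigma) : Prop :=
  exists (A : vpa Sigma) (ord : vstate A -> rel Sigma),
    vdet_complete kind A /\
    (forall q, strict_total_order (ord q)) /\
    forall w q0 q s, q0 \in vinit A -> vreach kind (q0, [::]) w (q, s) ->
      prec w = ord q.

From mathcomp Require Import all_boot.
From Stdlib Require Import Setoid.
Set Implicit Arguments. Unset Strict Implicit. Unset Printing Implicit Defensive.

(* A word w is non-reduced exactly when it has a factor b v a, with a
   independent of every letter of b v and a ≺_α b for the prefix α before b:
   commuting a to the front of the factor gives an equivalent smaller word.
   Whether such a factor exists can be decided online by remembering, along
   the word, the set of letters a that would complete one if read next, and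
   the step updating that set only needs the current order ≺_w.  Since the
   order is computed by a deterministic VPA, the product of that VPA with
   this finite bookkeeping is a VPA accepting the reduced words. *)

Lemma filter_cons_split (T : eqType) (p : pred T) s a r :
  filter p s = a :: r -> exists s1 s2, s = s1 ++ a :: s2 /\ all (predC p) s1.
Proof.
elim: s => [|y s IH] //=.
case: ifP => py; first by case=> -> _; exists [::], s.
move/IH => [s1 [s2 [-> s1_notp]]].
by exists (y :: s1), s2; rewrite /= py.
Qed.

Section Traces.
Variables (Sigma : finType) (n : nat) (comp : Sigma -> 'I_n).

Lemma trace_eq_filter u w : trace_eq comp u w ->
  forall i, filter (fun y => comp y == i) u = filter (fun y => comp y == i) w.
Proof.
elim=> // [x a b v ab_indep i | w1 w2 w3 _ E12 _ E23 i]; last by rewrite E12 E23.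
rewrite !filter_cat /=.
case: (eqVneq (comp a) i) => ai; case: (eqVneq (comp b) i) => bi //.
by move: ab_indep; rewrite ai bi eqxx.
Qed.

Lemma trace_eq_size u w : trace_eq comp u w -> size u = size w.
Proof.
elim=> // [x a b v _ | ? ? ? _ -> _ ->] //.
by rewrite !size_cat.
Qed.

Lemma trace_eq_move a s x y : all (fun y => comp y != comp a) s ->
  trace_eq comp (x ++ a :: s ++ y) (x ++ s ++ a :: y).
Proof.
elim: s x => [|c s IH] x /=; first by move=> _; exact: te_refl.
case/andP=> ca s_indep.
apply: te_trans (te_swap x (s ++ y) _) _; first by rewrite eq_sym.
by have := IH (rcons x c) s_indep; rewrite !cat_rcons.
Qed.

End Traces.

Section Lowerings.
Variables (Sigma : finType) (n : nat) (comp : Sigma -> 'I_n).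
Variable prec : seq Sigma -> rel Sigma.

Definition lowerable (w : seq Sigma) (a : Sigma) : Prop :=
  exists alpha b v, w = alpha ++ b :: v /\
    all (fun y => comp y != comp a) (b :: v) /\ prec alpha a b.

Definition has_lowering (w : seq Sigma) : Prop :=
  exists alpha b v a gamma, w = alpha ++ b :: v ++ a :: gamma /\
    all (fun y => comp y != comp a) (b :: v) /\ prec alpha a b.

Lemma lowerable_nil a : ~ lowerable [::] a.
Proof. by move=> [[|? ?] [b [v [E _]]]]. Qed.

Lemma has_lowering_nil : ~ has_lowering [::].
Proof. by move=> [[|? ?] [b [v [a [g [E _]]]]]]. Qed.

Lemma lowerable_rcons w c a :
  lowerable (rcons w c) a <-> comp a != comp c /\ (lowerable w a \/ prec w a c).
Proof.
split.
- move=> [alpha [b [v [E [indep lt_ab]]]]].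
  case/lastP: v E indep => [|v z] E indep.
    rewrite cats1 in E; case/rcons_inj: E => -> ->.
    by split; [case/andP: indep; rewrite eq_sym | right].
  rewrite -rcons_cons -rcons_cat in E; case/rcons_inj: E => -> ->.
  move: indep; rewrite -rcons_cons all_rcons => /andP [za indep].
  by split; [rewrite eq_sym | left; exists alpha, b, v].
- move=> [ca [[alpha [b [v [-> [indep lt_ab]]]]] | lt_ac]].
    exists alpha, b, (rcons v c); rewrite rcons_cat -rcons_cons all_rcons.
    by rewrite indep eq_sym ca.
  by exists w, c, [::]; rewrite cats1 /= eq_sym ca.
Qed.

Lemma has_lowering_rcons w c :
  has_lowering (rcons w c) <-> has_lowering w \/ lowerable w c.
Proof.
split.
- move=> [alpha [b [v [a [g [E low]]]]]].
  case/lastP: g E => [|g z] E.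
    have /rcons_inj [-> ->] : rcons w c = rcons (alpha ++ b :: v) a.
      by rewrite E -cats1 -catA.
    by right; exists alpha, b, v.
  rewrite -rcons_cons -rcons_cat -rcons_cons -rcons_cat in E.
  by case/rcons_inj: E => -> _; left; exists alpha, b, v, a, g.
- move=> [[alpha [b [v [a [g [-> low]]]]]] | [alpha [b [v [-> low]]]]].
    exists alpha, b, v, a, (rcons g c).
    by rewrite rcons_cat rcons_cons rcons_cat rcons_cons.
  by exists alpha, b, v, c, [::]; rewrite -cats1 -!catA.
Qed.

Lemma has_lowering_not_red w : has_lowering w -> ~ red comp prec (fun _ => True) w.
Proof.
move=> [alpha [b [v [a [gamma [Ew [indep lt_ab]]]]]]] [_ minimal].
have ba : comp b != comp a by case/andP: indep.
have E : alpha ++ a :: b :: v ++ gamma = alpha ++ b :: v ++ a :: gamma.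
  rewrite -Ew; apply: minimal => //; first by rewrite Ew; exact: trace_eq_move indep.
  by right; exists alpha, a, (b :: v ++ gamma), b, (v ++ a :: gamma); rewrite Ew.
move: ba; have := congr1 (drop (size alpha)) E.
by rewrite !drop_size_cat // => -[->]; rewrite eqxx.
Qed.

Hypothesis prec_irr : forall alpha, irreflexive (prec alpha).

(* Comparing the projections on the component of a: the first letter of w
   there is a, so a occurs after b, with only letters independent of a in
   between, which yields a lowering of w. *)
Lemma red_of_no_lowering w : ~ has_lowering w -> red comp prec (fun _ => True) w.
Proof.
move=> no_low; split=> // u _ uw [pre|[alpha [a [beta [b [gamma [Eu [Ew lt_ab]]]]]]]].
  by move: pre; rewrite prefixE (trace_eq_size uw) take_size => /eqP.
case: no_low.
have := trace_eq_filter uw (comp a); rewrite Eu Ew !filter_cat /= eqxx.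
move/(congr1 (drop (size (filter (fun y => comp y == comp a) alpha)))).
rewrite !drop_size_cat // => /esym/(filter_cons_split (s := b :: gamma)) [[|b' v] [s2 [E indep]]].
  by case: E lt_ab => ->; rewrite prec_irr.
case: E lt_ab indep => -> -> lt_ab indep.
by exists alpha, b', v, a, s2.
Qed.

Lemma red_iff_no_lowering w :
  red comp prec (fun _ => True) w <-> ~ has_lowering w.
Proof.
by split; [move=> red_w /has_lowering_not_red | exact: red_of_no_lowering].
Qed.

End Lowerings.

Section Runs.
Variables (Sigma : finType) (kind : Sigma -> vpkind) (A : vpa Sigma).

Lemma vreach_rcons w a (c c' : vconfig A) :
  vreach kind c (rcons w a) c' <-> exists c1, vreach kind c w c1 /\ vstep kind c1 a c'.
Proof.
elim: w c => [|y w IH] c /=.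
  by split=> [[c1 [step <-]] | [c1 [<- step]]]; [exists c | exists c'].
split=> [[c1 [step /IH [c2 [run step2]]]] | [c2 [[c1 [step run]] step2]]].
  by exists c2; split=> //; exists c1.
by exists c1; split=> //; apply/IH; exists c2.
Qed.

Lemma vstep_total : vdet_complete kind A -> forall (c : vconfig A) a, exists c', vstep kind c a c'.
Proof.
move=> [_ [call_tot [ret_tot int_tot]]] c a; rewrite /vstep; case ka: (kind a).
- have [[q' g] [[g_bot call] _]] := call_tot c.1 a ka.
  by exists (q', g :: c.2); exists g.
- case s: c.2 => [|g s0].
    by have [q' [ret _]] := ret_tot c.1 a (vbot A) ka; exists (q', [::]); left.
  have [q' [ret _]] := ret_tot c.1 a g ka.
  by exists (q', s0); right; exists g, s0.
- by have [q' [int _]] := int_tot c.1 a ka; exists (q', c.2).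
Qed.

Lemma vreach_total : vdet_complete kind A -> forall w (c : vconfig A), exists c', vreach kind c w c'.
Proof.
move=> detA; elim=> [|a w IH] c; first by exists c.
have [c1 step] := vstep_total detA c a.
by have [c' run] := IH c1; exists c'; exists c1.
Qed.

End Runs.

Section LoweringMonitor.
Variables (Sigma : finType) (n : nat) (kind : Sigma -> vpkind).
Variables (comp : Sigma -> 'I_n) (A : vpa Sigma) (ord : vstate A -> rel Sigma).

Definition monitor_state := (vstate A * {set Sigma} * bool)%type.

Definition monitor_update (x : monitor_state) (c : Sigma) (q' : vstate A) :
    monitor_state :=
  (q', [set a | (comp a != comp c) && ((a \in x.1.2) || ord x.1.1 a c)],
   x.2 || (c \in x.1.2)).

Definition lowering_monitor : vpa Sigma :=
  @VPA Sigma monitor_state (vstack A) (vbot A)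
    [set x | (x.1.1 \in vinit A) && (x.1.2 == set0) && ~~ x.2]
    [set x | ~~ x.2]
    (fun x c x' g => @vcall _ A x.1.1 c x'.1.1 g && (x' == monitor_update x c x'.1.1))
    (fun x c g x' => @vret _ A x.1.1 c g x'.1.1 && (x' == monitor_update x c x'.1.1))
    (fun x c x' => @vint _ A x.1.1 c x'.1.1 && (x' == monitor_update x c x'.1.1)).

Lemma lowering_monitor_step x s c x' s' :
  vstep kind (A := lowering_monitor) (x, s) c (x', s') <->
  vstep kind (A := A) (x.1.1, s) c (x'.1.1, s') /\ x' = monitor_update x c x'.1.1.
Proof.
rewrite /vstep /=; case: (kind c) => /=.
- split=> [[g [g_bot [/andP [call /eqP ->] ->]]] | [[g [g_bot [call ->]]] ->]].
    by split=> //; exists g.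
  by exists g; rewrite call eqxx.
- split=> [[[-> [/andP [ret /eqP ->] ->]] | [g [s0 [-> [/andP [ret /eqP ->] ->]]]]]
          | [[[-> [ret ->]] | [g [s0 [-> [ret ->]]]]] Ex']].
  + by split=> //; left.
  + by split=> //; right; exists g, s0.
  + by left; rewrite ret -Ex' eqxx.
  + by right; exists g, s0; rewrite ret -Ex' eqxx.
- split=> [[/andP [int /eqP ->] ->] | [[int ->] Ex']] //.
  by rewrite int -Ex' eqxx.
Qed.

Lemma lowering_monitor_reach_proj w x s x' s' :
  vreach kind (A := lowering_monitor) (x, s) w (x', s') ->
  vreach kind (A := A) (x.1.1, s) w (x'.1.1, s').
Proof.
elim: w x s => [|c w IH] x s /=; first by case=> -> ->.
move=> [[x1 s1] [/lowering_monitor_step [step _] /IH run]].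
by exists (x1.1.1, s1).
Qed.

Lemma lowering_monitor_reach_lift w q s q' s' D f :
  vreach kind (A := A) (q, s) w (q', s') ->
  exists x', x'.1.1 = q' /\ vreach kind (A := lowering_monitor) ((q, D, f), s) w (x', s').
Proof.
elim: w q s D f => [|c w IH] q s D f /=; first by case=> <- <-; exists (q, D, f).
move=> [[q1 s1] [step run]].
set x1 := monitor_update (q, D, f) c q1.
have [x' [<- run']] := IH _ _ x1.1.2 x1.2 run.
exists x'; split=> //; exists (x1, s1); split=> //.
exact/lowering_monitor_step.
Qed.

Variable prec : seq Sigma -> rel Sigma.
Hypothesis prec_ord : forall w q0 q s, q0 \in vinit A ->
  vreach kind (q0, [::]) w (q, s) -> prec w = ord q.

Lemma lowering_monitor_invariant w x0 x s :
  x0 \in vinit lowering_monitor -> vreach kind (x0, [::]) w (x, s) ->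
  (forall a, a \in x.1.2 <-> lowerable comp prec w a) /\
  (x.2 <-> has_lowering comp prec w).
Proof.
move=> init0; elim/last_ind: w x s => [|w c IH] x s.
  move: init0; rewrite inE => /andP [/andP [_ /eqP D0] f0] [<- _].
  split=> [a | ]; first by rewrite D0 inE; split=> // /lowerable_nil.
  by rewrite (negbTE f0); split=> // /has_lowering_nil.
move/vreach_rcons => [[x1 s1] [run /lowering_monitor_step [stepA ->]]] /=.
have [IH_set IH_flag] := IH _ _ run.
have init0A : x0.1.1 \in vinit A by move: init0; rewrite inE => /andP [/andP []].
have prec_w := prec_ord init0A (lowering_monitor_reach_proj run).
split=> [a | ].
  by rewrite inE lowerable_rcons prec_w -IH_set -(rwP andP) -(rwP orP).
by rewrite has_lowering_rcons -IH_flag -IH_set -(rwP orP).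
Qed.

End LoweringMonitor.

Theorem proposition3p12 (Sigma : finType) (n : nat) (kind : Sigma -> vpkind)
  (comp : Sigma -> 'I_n) (prec : seq Sigma -> rel Sigma) :
  contextual_order prec ->
  vp_contextual_order kind prec ->
  vp_language kind (red comp prec (fun _ => True)).
Proof.
move=> prec_total [A [ord [detA [_ prec_ord]]]].
have prec_irr alpha : irreflexive (prec alpha) by case: (prec_total alpha).
exists (lowering_monitor comp ord) => w; rewrite red_iff_no_lowering //; split.
- move=> no_low.
  have /card_gt0P [q0 init_q0] : 0 < #|vinit A| by rewrite detA.1.
  have [[q s] run] := vreach_total detA w (q0, [::]).
  have [x [_ run']] := lowering_monitor_reach_lift comp ord set0 false run.
  have init0 : (q0, set0, false) \in vinit (lowering_monitor comp ord).
    by rewrite inE /= init_q0 eqxx.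
  have [_ flag] := lowering_monitor_invariant prec_ord init0 run'.
  exists (q0, set0, false), x, s; do 2 split=> //.
  by rewrite inE; apply/negP => /flag.
- move=> [x0 [x [s [init0 [run final]]]]] /(lowering_monitor_invariant prec_ord init0 run).2.
  by rewrite inE in final; move/negP: final.
Qed.
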